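(* Let $\xi$ be an American option and $(y,\chi)\in\Phi^{\mathrm{bg}}(\xi)$. Then for all $t=0,\ldots,T$, \[ y_t\in\chi^\ast_t\mathcal{Z}^{\mathrm{bd}}_t\ \text{ on }\{\chi^\ast_t>0\},\qquad y_t\in\mathcal{Q}_t\ \text{ on }\{\chi^\ast_t=0\}, \] that is, for each $\mu\in\Omega_t$: if $\chi^\ast_t(\mu)>0$ then $y_t(\mu)\in\chi^\ast_t(\mu)\mathcal{Z}^{\mathrm{bd}\mu}_t$, and if $\chi^\ast_t(\mu)=0$ then $y_t(\mu)\in\mathcal{Q}^\mu_t$.
   Context: Finite filtered probability space $(\Omega,\mathcal{F},\mathbb{P};(\mathcal{F}_t)_{t=0}^T)$, $\mathcal{F}_0$ trivial, $\mathcal{F}_T=2^\Omega$, $\mathbb{P}(\{\omega\})>0$. $\Omega_t$: atoms (nodes) of $\mathcal{F}_t$; $\mathrm{succ}\,\mu=\{\nu\in\Omega_{t+1}:\nu\subseteq\mu\}$. $\mathcal{L}_t$: $\mathcal{F}_t$-measurable $\mathbb{R}^d$-valued random variables (functions on $\Omega_t$). $d$ assets, $\mathcal{F}_t$-measurable exchange rates $\pi^{jk}_t>0$, $\pi^{jj}_t=1$. $\mathcal{K}^\mu_t$: convex cone generated by $e^1,\ldots,e^d$ and $\pi^{jk}_t(\mu)e^j-e^k$; $\mathcal{K}_t=\{x\in\mathcal{L}_t:x(\mu)\in\mathcal{K}^\mu_t\ \forall\mu\}$. Deferred solvency cone $\mathcal{Q}_t$: $z\in\mathcal{L}_t$ for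 which there exist $y_{t+1},\ldots,y_{T+1}$, $y_s\in\mathcal{L}_{s-1}$, $y_{T+1}=0$, with $z-y_{t+1}\in\mathcal{K}_t$, $y_s-y_{s+1}\in\mathcal{K}_s$ ($s>t$); $\mathcal{Q}^\mu_t=\{z(\mu):z\in\mathcal{Q}_t\}$. Trading strategies $\Phi$: $y=(y_t)_{t=0}^{T+1}$, $y_0\in\mathbb{R}^d$, $y_t\in\mathcal{L}_{t-1}$, $y_{T+1}=0$. Mixed stopping times $\mathcal{X}$: adapted $[0,1]$-valued $\chi$ with $\sum_{t=0}^T\chi_t=1$; $\chi^\ast_t=\sum_{s=t}^T\chi_s$. American option: adapted $\mathbb{R}^d$-valued $\xi$. $\Phi^{\mathrm{bg}}(\xi)$: pairs $(y,\chi)\in\Phi\times\mathcal{X}$ with $y_t+\chi_t\xi_t-y_{t+1}\in\mathcal{K}_t$ for each $t=0,\ldots,T$. Construction (nodewise): $\mathcal{U}^{\mathrm{bd}\mu}_t=-\xi_t(\mu)+\mathcal{Q}^\mu_t$; at $T$: $\mathcal{Z}^{\mathrm{bd}\mu}_T=\mathcal{V}^{\mathrm{bd}\mu}_T=\mathcal{W}^{\mathrm{bd}\mu}_T=\mathcal{U}^{\mathrm{bd}\mu}_T$; for $t<T$: $\mathcal{W}^{\mathrm{bd}\mu}_t=\bigcap_{\nu\in\mathrm{succ}\,\mu}\mathcal{Z}^{\mathrm{bd}\nu}_{t+1}$, $\mathcal{V}^{\mathrm{bd}\mu}_t=\mathcal{W}^{\mathrm{bd}\mu}_t+\mathcal{Q}^\mu_t$,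 $\mathcal{Z}^{\mathrm{bd}\mu}_t=\mathrm{conv}\{\mathcal{U}^{\mathrm{bd}\mu}_t,\mathcal{V}^{\mathrm{bd}\mu}_t\}$. Standing assumption: no arbitrage (no $y\in\Phi$ with $y_0=0$, $y_t-y_{t+1}\in\mathcal{K}_t$ for $t<T$ and $y_T-x\in\mathcal{K}_T$ for a nonzero componentwise non-negative $x\in\mathcal{L}_T$). *)

From mathcomp Require Import all_boot all_order all_algebra.
Set Implicit Arguments. Unset Strict Implicit. Unset Printing Implicit Defensive.
Import Order.TTheory GRing.Theory Num.Theory.
Local Open Scope ring_scope.

Section Market.
Variables (R : realFieldType) (d : nat) (Omega : finType) (T : nat).

(* The filtration is given by its atoms: [part t w] is the atom (node) of
   F_t containing w. *)
Variable part : nat -> Omega -> {set Omega}.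

Definition is_filtration : Prop :=
  [/\ forall t w, w \in part t w,
      forall t w w', w' \in part t w -> part t w' = part t w,
      forall t w, (t < T)%N -> part t.+1 w \subset part t w,
      forall w, part 0%N w = setT &
      forall w, part T w = [set w]].

Definition vec := 'rV[R]_d.

Definition measurable_at (A : Type) (t : nat) (x : Omega -> A) : Prop :=
  forall w w', w' \in part t w -> x w' = x w.

Definition evec (j : 'I_d) : vec := delta_mx 0 j.

Definition in_Kcone (p : 'I_d -> 'I_d -> R) (v : vec) : Prop :=
  exists (a : 'I_d -> R) (b : 'I_d -> 'I_d -> R),
    [/\ forall j, 0 <= a j, forall j k, 0 <= b j k &
        v = \sum_j a j *: evec j
            + \sum_j \sum_k b j k *: (p j k *: evec j - evec k)].

Variable pi : nat -> Omega -> 'I_d -> 'I_d -> R.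

Definition exchange_rates : Prop :=
  forall t, (t <= T)%N ->
    [/\ measurable_at t (pi t),
        forall w j k, 0 < pi t w j k &
        forall w j, pi t w j j = 1].

Definition in_K (t : nat) (x : Omega -> vec) : Prop :=
  forall w, in_Kcone (pi t w) (x w).

Definition in_Q (t : nat) (z : Omega -> vec) : Prop :=
  measurable_at t z /\
  exists ys : nat -> Omega -> vec,
    [/\ forall s, (t < s <= T.+1)%N -> measurable_at s.-1 (ys s),
        forall w, ys T.+1 w = 0,
        in_K t (fun w => z w - ys t.+1 w) &
        forall s, (t < s <= T)%N -> in_K s (fun w => ys s w - ys s.+1 w)].

(* Q^mu_t, with mu the atom of F_t containing w *)
Definition Qnode (t : nat) (w : Omega) (v : vec) : Prop :=
  exists z, in_Q t z /\ z w = v.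

Definition convex_set (C : vec -> Prop) : Prop :=
  forall x y (l : R), 0 <= l <= 1 -> C x -> C y -> C (l *: x + (1 - l) *: y).

Definition conv_hull (A : vec -> Prop) : vec -> Prop :=
  fun v => forall C, convex_set C -> (forall u, A u -> C u) -> C v.

Definition msum (A B : vec -> Prop) : vec -> Prop :=
  fun v => exists a b, [/\ A a, B b & v = a + b].

Variable xi : nat -> Omega -> vec.

Definition adapted_payoff : Prop :=
  forall t, (t <= T)%N -> measurable_at t (xi t).

Definition Ubd (t : nat) (w : Omega) : vec -> Prop :=
  fun v => exists q, Qnode t w q /\ v = - xi t w + q.

(* Backward recursion, k = T - t steps from the horizon. *)
Fixpoint Zrec (k : nat) : Omega -> vec -> Prop :=
  match k with
  | 0%N => Ubd T
  | k'.+1 => fun w =>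
      let t := (T - k'.+1)%N in
      (* W^{bd mu}_t: intersection over successors nu of mu of Z^{bd nu}_{t+1};
         successors of mu = part t w are the atoms part (t+1) w', w' in mu *)
      let W := fun v => forall w', w' \in part t w -> Zrec k' w' v in
      let V := msum W (Qnode t w) in
      conv_hull (fun v => Ubd t w v \/ V v)
  end.

Definition Zbd (t : nat) (w : Omega) : vec -> Prop := Zrec (T - t) w.

Definition is_strategy (y : nat -> Omega -> vec) : Prop :=
  [/\ forall w w', y 0%N w = y 0%N w',
      forall t, (1 <= t <= T)%N -> measurable_at t.-1 (y t) &
      forall w, y T.+1 w = 0].

Definition is_mixed_stop (chi : nat -> Omega -> R) : Prop :=
  [/\ forall t, (t <= T)%N -> measurable_at t (chi t),
      forall t w, (t <= T)%N -> 0 <= chi t w <= 1 &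
      forall w, \sum_(t < T.+1) chi t w = 1].

Definition chistar (chi : nat -> Omega -> R) (t : nat) (w : Omega) : R :=
  \sum_(t <= s < T.+1) chi s w.

Definition in_Phi_bg (y : nat -> Omega -> vec) (chi : nat -> Omega -> R) : Prop :=
  [/\ is_strategy y, is_mixed_stop chi &
      forall t, (t <= T)%N ->
        in_K t (fun w => y t w + chi t w *: xi t w - y t.+1 w)].

End Market.

Definition no_arbitrage (R : realFieldType) (d : nat) (Omega : finType) (T : nat)
  (part : nat -> Omega -> {set Omega}) (pi : nat -> Omega -> 'I_d -> 'I_d -> R) : Prop :=
  ~ exists (y : nat -> Omega -> 'rV[R]_d) (x : Omega -> 'rV[R]_d),
      [/\ is_strategy T part y,
          forall w, y 0%N w = 0,
          forall t, (t < T)%N -> in_K pi t (fun w => y t w - y t.+1 w),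
          in_K pi T (fun w => y T w - x w) &
          (forall w i, 0 <= x w 0 i) /\ (exists w, x w != 0)].

(* Where chi*_t = 0, the tail y_{t+1}, y_{t+2}, ...
   of the strategy liquidates y_t, so y_t lies in Q_t.  Where chi*_t = c > 0,
   let c' = chi*_{t+1} = c - chi_t and k = y_t + chi_t xi_t - y_{t+1}, an
   F_t-measurable element of K_t.  If c' = 0, then (y_t + chi_t xi_t) / c is
   liquidated after t, hence lies in Q_t, and y_t / c lies in U_t.  If c' > 0,
   by induction y_{t+1} / c' lies in Z_{t+1} at every successor node
   (y_{t+1} and c' being F_t-measurable) and k / c' lies in Q_t, so
   y_t = chi_t (-xi_t) + c' (y_{t+1} / c' + k / c') is c times a convex
   combination of a point of U_t and a point of V_t. *)
From mathcomp Require Import all_boot all_order all_algebra.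
From mathcomp Require Import zify ring.
Set Implicit Arguments. Unset Strict Implicit. Unset Printing Implicit Defensive.
Import Order.TTheory GRing.Theory Num.Theory.
Local Open Scope ring_scope.

Section Cones.
Variables (R : realFieldType) (d : nat).

Lemma in_Kcone0 (p : 'I_d -> 'I_d -> R) : in_Kcone p 0.
Proof.
exists (fun _ => 0), (fun _ _ => 0); split => //.
rewrite [X in X + _]big1 ?add0r => [|j _]; last by rewrite scale0r.
by rewrite big1 // => j _; rewrite big1 // => k _; rewrite scale0r.
Qed.

Lemma in_Kcone_scale (p : 'I_d -> 'I_d -> R) (a : R) v :
  0 <= a -> in_Kcone p v -> in_Kcone p (a *: v).
Proof.
move=> a0 [c [b [c0 b0 ->]]].
exists (fun j => a * c j), (fun j k => a * b j k); split.
- by move=> j; rewrite mulr_ge0.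
- by move=> j k; rewrite mulr_ge0.
rewrite scalerDr !scaler_sumr; congr (_ + _); apply: eq_bigr => j _.
  by rewrite scalerA.
by rewrite scaler_sumr; apply: eq_bigr => k _; rewrite scalerA.
Qed.

Lemma mem_conv_hull (A : 'rV[R]_d -> Prop) v : A v -> conv_hull A v.
Proof. by move=> Av C _ AsubC; apply: AsubC. Qed.

Lemma conv_hull_cone (A : 'rV[R]_d -> Prop) (a b : R) u v :
  0 <= a -> 0 <= b -> 0 < a + b -> A u -> A v ->
  exists z, conv_hull A z /\ a *: u + b *: v = (a + b) *: z.
Proof.
move=> a0 b0 ab0 Au Av; set l := a / (a + b).
have ab_neq0 : a + b != 0 by rewrite gt_eqF.
exists (l *: u + (1 - l) *: v); split.
  move=> C convC AsubC; apply: convC; [|exact: AsubC..].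
  by rewrite /l divr_ge0 ?(ltW ab0) //= ler_pdivrMr // mul1r lerDl.
have -> : 1 - l = b / (a + b) by rewrite /l; field.
by rewrite scalerDr !scalerA !mulrA !(mulrC (a + b)) !mulfK.
Qed.

End Cones.

Section Market.
Variables (R : realFieldType) (d : nat) (Omega : finType) (T : nat)
  (part : nat -> Omega -> {set Omega})
  (pi : nat -> Omega -> 'I_d -> 'I_d -> R).

Local Notation Qn := (Qnode T part pi).

Lemma Qnode0 t w : Qn t w 0.
Proof.
exists (fun _ => 0); split => //; split => //.
exists (fun _ _ => 0); split => // [om | s _ om]; rewrite subr0; exact: in_Kcone0.
Qed.

Lemma Qnode_scale t w (a : R) v : 0 <= a -> Qn t w v -> Qn t w (a *: v).
Proof.
move=> a0 [z [[zm [ys [ysm ysT Kt Ks]]] <-]].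
exists (fun om => a *: z om); split => //; split.
  by move=> w1 w2 H12; rewrite (zm _ _ H12).
exists (fun s om => a *: ys s om); split.
- by move=> s Hs w1 w2 H12; rewrite (ysm s Hs _ _ H12).
- by move=> om; rewrite ysT scaler0.
- by move=> om; rewrite -scalerBr; apply: in_Kcone_scale.
- by move=> s Hs om; rewrite -scalerBr; apply: in_Kcone_scale => //; apply: Ks.
Qed.

Hypothesis Hf : is_filtration T part.

Lemma mem_part t w : w \in part t w.
Proof. by case: Hf. Qed.

Lemma part_mono s t w : (s <= t <= T)%N -> part t w \subset part s w.
Proof.
case: Hf => _ _ part_succ _ _.
elim: t => [|t IH] /andP[st tT]; first by have -> : s = 0%N by lia.
have [->|st'] := eqVneq s t.+1; first exact: subxx.
apply: subset_trans (part_succ t w _) (IH _); lia.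
Qed.

Lemma measurable_mono (A : Type) s t (x : Omega -> A) :
  measurable_at part s x -> (s <= t <= T)%N -> measurable_at part t x.
Proof. by move=> xm st w w' H; apply: xm; apply: (subsetP (part_mono w st)). Qed.

Lemma part_mem_eq t w w1 w2 : w2 \in part t w1 ->
  (w2 \in part t w) = (w1 \in part t w).
Proof.
case: Hf => _ part_eq _ _ _ H21.
apply/idP/idP => [H2 | H1]; last by rewrite (part_eq _ _ _ H1) in H21.
by rewrite -(part_eq _ _ _ H2) (part_eq _ _ _ H21) mem_part.
Qed.

(* Cutting the liquidating strategy off to 0 outside the node mu preserves
   measurability after t, since mu is a union of atoms of every later F_s. *)
Lemma Qnode_local t w (z : Omega -> 'rV[R]_d) (ys : nat -> Omega -> 'rV[R]_d) :
  (t <= T)%N -> measurable_at part t z ->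
  (forall s, (t < s <= T.+1)%N -> measurable_at part s.-1 (ys s)) ->
  (forall om, om \in part t w ->
     [/\ ys T.+1 om = 0, in_Kcone (pi t om) (z om - ys t.+1 om) &
         forall s, (t < s <= T)%N -> in_Kcone (pi s om) (ys s om - ys s.+1 om)]) ->
  Qn t w (z w).
Proof.
move=> tT zm ysm Hloc.
pose cut (f : Omega -> 'rV[R]_d) om := if om \in part t w then f om else 0.
have cut_meas u f : (t <= u <= T)%N -> measurable_at part u f ->
    measurable_at part u (cut f).
  move=> tu fm w1 w2 H12; rewrite /cut (fm _ _ H12).
  by rewrite (part_mem_eq w (subsetP (part_mono w1 tu) _ H12)).
exists (cut z); split; last by rewrite /cut mem_part.
split; first by apply: cut_meas; rewrite ?leqnn.
exists (fun s => cut (ys s)); split.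
- by move=> s Hs; apply: cut_meas; [lia | exact: ysm].
- by move=> om; rewrite /cut; case: ifP => // /Hloc[].
- move=> om; rewrite /cut /=; case: ifP => [/Hloc[] // | _].
  by rewrite subr0; exact: in_Kcone0.
- move=> s Hs om; rewrite /cut /=; case: ifP => [/Hloc[_ _ Ks] | _]; first exact: Ks.
  by rewrite subr0; exact: in_Kcone0.
Qed.

Lemma Qnode_of_K t w (z : Omega -> 'rV[R]_d) :
  (t <= T)%N -> measurable_at part t z ->
  (forall om, om \in part t w -> in_Kcone (pi t om) (z om)) -> Qn t w (z w).
Proof.
move=> tT zm zK; apply: (@Qnode_local _ _ _ (fun _ _ => 0)) => // om /zK Kz.
by split => // [|s _]; rewrite subr0 //; exact: in_Kcone0.
Qed.

Section Hedge.
Variables (xi : nat -> Omega -> 'rV[R]_d)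
  (y : nat -> Omega -> 'rV[R]_d) (chi : nat -> Omega -> R).
Hypothesis Hxi : adapted_payoff T part xi.
Hypothesis Hphi : in_Phi_bg T part pi xi y chi.

Local Notation Un := (Ubd T part pi xi).
Local Notation Zn := (Zbd T part pi xi).
Local Notation chis := (chistar T chi).

Lemma Zbd_T w v : Zn T w v <-> Un T w v.
Proof. by rewrite /Zbd subnn. Qed.

Lemma Zbd_S t w v : (t < T)%N ->
  Zn t w v <->
  conv_hull (fun v => Un t w v \/
     msum (fun v => forall w', w' \in part t w -> Zn t.+1 w' v) (Qn t w) v) v.
Proof.
move=> tT; rewrite /Zbd.
have -> : (T - t = (T - t.+1).+1)%N by lia.
by rewrite /= (_ : (T - (T - t.+1).+1 = t)%N) //; lia.
Qed.

Lemma Zbd_of_Ubd t w v : (t <= T)%N -> Un t w v -> Zn t w v.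
Proof.
move=> tT; have [-> Uv | tT' Uv] := eqVneq t T; first exact/Zbd_T.
by apply/Zbd_S; [lia | apply: mem_conv_hull; left].
Qed.

Lemma Ubd_neg_payoff t w : Un t w (- xi t w).
Proof. by exists 0; split; [exact: Qnode0 | rewrite addr0]. Qed.

Lemma y_predictable t : (t <= T)%N -> measurable_at part t (y t.+1).
Proof.
case: Hphi => [[_ ym yT] _ _] tT.
have [tT' | Tt] := ltnP t T; first by apply: (ym t.+1); lia.
have -> : t = T by lia.
by move=> w w' _; rewrite !yT.
Qed.

Lemma y_measurable t : (t <= T)%N -> measurable_at part t (y t).
Proof.
case: Hphi => [[y0 _ _] _ _]; case: t => [_ | t tT].
  by move=> w w' _; apply: y0.
by apply: (measurable_mono (y_predictable _)); lia.
Qed.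

Lemma chi_measurable t : (t <= T)%N -> measurable_at part t (chi t).
Proof. by case: Hphi => _ [chim _ _] _; apply: chim. Qed.

Lemma chi_ge0 t w : (t <= T)%N -> 0 <= chi t w.
Proof. by case: Hphi => _ [_ chi01 _] _ tT; case/andP: (chi01 t w tT). Qed.

Lemma chistar_recl t w : (t <= T)%N -> chis t w = chi t w + chis t.+1 w.
Proof. by move=> tT; rewrite /chistar big_ltn. Qed.

Lemma chistar_after_horizon w : chis T.+1 w = 0.
Proof. by rewrite /chistar big_geq. Qed.

Lemma chistar_ge0 t w : 0 <= chis t w.
Proof.
rewrite /chistar big_nat_cond; apply: sumr_ge0 => s /andP[/andP[_ sT] _].
exact: chi_ge0.
Qed.

Lemma chistar_eq0 t s w : chis t w = 0 -> (t <= s <= T)%N -> chi s w = 0.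
Proof.
move/eqP; rewrite /chistar big_nat_cond psumr_eq0 => [/allP chi0 tsT | s'].
  by apply/eqP; move: (chi0 s); rewrite mem_index_iota ltnS tsT; apply.
by case/andP=> /andP[_ s'T] _; exact: chi_ge0.
Qed.

Lemma chistar_measurable t u : (u <= T)%N -> (t <= u.+1)%N ->
  measurable_at part u (chis t).
Proof.
move=> uT tu.
have chisE w : chis t w = 1 - \sum_(0 <= s < t) chi s w.
  case: Hphi => _ [_ _ chi1] _.
  rewrite -(chi1 w) -(big_mkord xpredT (fun s => chi s w)).
  rewrite (big_cat_nat (n := t)) //=; last by lia.
  by rewrite addrC addrK.
move=> w w' H; rewrite !chisE; congr (_ - _); apply: eq_big_nat => s ts.
by apply: (measurable_mono (chi_measurable _)) => //; lia.
Qed.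

Lemma Qnode_hedge_tail t w : (t <= T)%N ->
  (forall om, om \in part t w -> forall s, (t < s <= T)%N -> chi s om = 0) ->
  Qn t w (y t w + chi t w *: xi t w).
Proof.
case: Hphi => [[_ _ yT] _ yK] tT chi0.
apply: (@Qnode_local _ _ (fun om => y t om + chi t om *: xi t om) y) => //.
- move=> w1 w2 H12.
  by rewrite (y_measurable tT H12) (chi_measurable tT H12) (Hxi tT H12).
- move=> s ts; have -> : s = s.-1.+1 by lia.
  by apply: y_predictable; lia.
move=> om /chi0 chi0om; split => // [|s ts]; first exact: yK.
have := yK s _ om; rewrite chi0om // scale0r addr0; apply; lia.
Qed.

Lemma y_in_Qnode t w : (t <= T)%N -> chis t w = 0 -> Qn t w (y t w).
Proof.
move=> tT chis0.
have chi0 om s : om \in part t w -> (t <= s <= T)%N -> chi s om = 0.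
  move=> om_w; apply: chistar_eq0.
  by rewrite (chistar_measurable tT (leqnSn t) om_w).
have := @Qnode_hedge_tail t w tT.
rewrite (chi0 w t (mem_part _ _)) ?leqnn // scale0r addr0; apply.
by move=> om om_w s ts; apply: chi0; lia.
Qed.

Lemma y_in_Zbd_cone_stopped t w : (t <= T)%N ->
  0 < chis t w -> chis t.+1 w = 0 ->
  exists z, Zn t w z /\ y t w = chis t w *: z.
Proof.
move=> tT c_gt0 c'_eq0; set c := chis t w in c_gt0 *.
have chi_c : chi t w = c by rewrite /c chistar_recl // c'_eq0 addr0.
exists (- xi t w + c^-1 *: (y t w + chi t w *: xi t w)); split.
  apply: Zbd_of_Ubd => //; eexists; split; last reflexivity.
  apply: Qnode_scale; first by rewrite invr_ge0 ltW.
  apply: Qnode_hedge_tail => // om om_w s ts; apply: (@chistar_eq0 t.+1) => //.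
  by rewrite (chistar_measurable tT (leqnn _) om_w).
rewrite scalerDr scalerA mulfV ?gt_eqF // scale1r chi_c scalerN.
by rewrite addrC addrK.
Qed.

Lemma y_in_Zbd_cone_step t w : (t < T)%N ->
  (forall w', 0 < chis t.+1 w' ->
     exists z, Zn t.+1 w' z /\ y t.+1 w' = chis t.+1 w' *: z) ->
  0 < chis t.+1 w ->
  exists z, Zn t w z /\ y t w = chis t w *: z.
Proof.
case: Hphi => _ _ yK tT' IH c'_gt0; have tT : (t <= T)%N by lia.
set c' := chis t.+1 w in c'_gt0; set ch := chi t w.
set k := y t w + ch *: xi t w - y t.+1 w.
have y_decomp : y t w = ch *: (- xi t w) + c' *: (c'^-1 *: y t.+1 w + c'^-1 *: k).
  rewrite -scalerDr scalerA mulfV ?gt_eqF // scale1r /k.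
  by rewrite (addrC (y t.+1 w)) subrK scalerN addrC addrK.
pose V := msum (fun v => forall w', w' \in part t w -> Zn t.+1 w' v) (Qn t w).
have V_mem : V (c'^-1 *: y t.+1 w + c'^-1 *: k).
  exists (c'^-1 *: y t.+1 w), (c'^-1 *: k); split => //.
    move=> w' w'_w.
    have c'E : chis t.+1 w' = c' by apply: (chistar_measurable tT (leqnn _)).
    have [z [Zz yE]] := IH w' ltac:(by rewrite c'E).
    by rewrite -(y_predictable tT w'_w) yE c'E scalerA mulVf ?gt_eqF // scale1r.
  apply: Qnode_scale; first by rewrite invr_ge0 ltW.
  apply: (@Qnode_of_K _ _ (fun om => y t om + chi t om *: xi t om - y t.+1 om)) => //.
    move=> w1 w2 H12.
    by rewrite (y_measurable tT H12) (chi_measurable tT H12) (Hxi tT H12)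
      (y_predictable tT H12).
  by move=> om _; apply: yK.
rewrite y_decomp.
have [z [Zz ->]] := @conv_hull_cone _ _ (fun v => Un t w v \/ V v) _ _ _ _
  (chi_ge0 w tT) (ltW c'_gt0) (ltr_wpDl (chi_ge0 w tT) c'_gt0)
  (or_introl (Ubd_neg_payoff t w)) (or_intror V_mem).
by exists z; split; [apply/Zbd_S | rewrite chistar_recl].
Qed.

Lemma y_in_Zbd_cone t w : (t <= T)%N -> 0 < chis t w ->
  exists z, Zn t w z /\ y t w = chis t w *: z.
Proof.
move Ek : (T - t)%N => k; elim: k t Ek w => [|k IH] t Ek w tT c_gt0.
  apply: y_in_Zbd_cone_stopped => //.
  have -> : t = T by lia.
  exact: chistar_after_horizon.
have [c'_eq0 | c'_neq0] := eqVneq (chis t.+1 w) 0; first exact: y_in_Zbd_cone_stopped.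
apply: y_in_Zbd_cone_step => [| w' | ]; first lia.
  by apply: IH; lia.
by rewrite lt0r c'_neq0 chistar_ge0.
Qed.

End Hedge.
End Market.

Theorem propositionA4 (R : realFieldType) (d : nat) (Omega : finType) (T : nat)
  (part : nat -> Omega -> {set Omega})
  (pi : nat -> Omega -> 'I_d -> 'I_d -> R)
  (xi : nat -> Omega -> 'rV[R]_d)
  (y : nat -> Omega -> 'rV[R]_d) (chi : nat -> Omega -> R) :
  is_filtration T part ->
  exchange_rates T part pi ->
  no_arbitrage T part pi ->
  adapted_payoff T part xi ->
  in_Phi_bg T part pi xi y chi ->
  forall t, (t <= T)%N -> forall w,
    (0 < chistar T chi t w ->
       exists z, Zbd T part pi xi t w z /\ y t w = chistar T chi t w *: z) /\
    (chistar T chi t w = 0 -> Qnode T part pi t w (y t w)).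
Proof.
move=> Hf _ _ Hxi Hphi t tT w; split.
- exact: (y_in_Zbd_cone Hf Hxi Hphi tT).
- exact: (y_in_Qnode Hf Hxi Hphi tT).
Qed.
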